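(* Let $G=(V,E)$ be a connected locally finite graph with measure $\mu$ and edge weights $w$ as described in the context, and suppose (i) there is a constant $\mu_0>0$ with $\mu(x)\ge\mu_0$ for all $x\in V$; (ii) $w_{xy}=w_{yx}$ for all $xy\in E$, and there is a constant $D$ with $\sum_{y\sim x}w_{xy}\le D$ for all $x\in V$. Then $W^{1,p}(V)=W_0^{1,p}(V)$ for all $1\le p<+\infty$.
   Context: $G=(V,E)$ is a connected graph with infinitely many vertices in which every vertex has finitely many neighbours; $y\sim x$ means $xy\in E$. A measure $\mu:V\to(0,+\infty)$ is given, and each edge $xy\in E$ carries a weight $w_{xy}>0$. For $u:V\to\mathbb{R}$, $|\nabla u|(x)=\big(\frac{1}{2\mu(x)}\sum_{y\sim x}w_{xy}(u(y)-u(x))^2\big)^{1/2}$, and $\|f\|_p=(\sum_{x\in V}\mu(x)|f(x)|^p)^{1/p}$. $W^{1,p}(V)$ is the space of $u:V\to\mathbb{R}$ with $\|u\|_{W^{1,p}(V)}=\|u\|_p+\||\nabla u|\|_p<\infty$. $C_c(V)$ is the set of finitely supported functions and $W_0^{1,p}(V)$ is the completion (closure in $W^{1,p}(V)$) of $C_c(V)$ under $\|\cdot\|_{W^{1,p}(V)}$. *)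

From Stdlib Require Import Reals List Relations.
From Coquelicot Require Import Coquelicot.
Open Scope R_scope.

Definition lsum {V : Type} (f : V -> R) (l : list V) : R :=
  fold_right (fun x acc => f x + acc) 0 l.

Definition rpow (a p : R) : R :=
  if Rle_dec a 0 then 0 else Rpower a p.

(* A locally finite graph on V is given by the (duplicate-free) finite list of
   neighbours of each vertex: y ~ x iff In y (nbrs x). *)
Definition adj {V : Type} (nbrs : V -> list V) (x y : V) : Prop := In y (nbrs x).

Definition grad_norm {V : Type} (nbrs : V -> list V) (mu : V -> R)
  (w : V -> V -> R) (u : V -> R) (x : V) : R :=
  sqrt (/ (2 * mu x) * lsum (fun y => w x y * (u y - u x) ^ 2) (nbrs x)).

(* sum_{x in V} mu(x) |f(x)|^p, as an extended real (supremum over finite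
   duplicate-free families of vertices) *)
Definition lp_sum {V : Type} (mu : V -> R) (p : R) (f : V -> R) : Rbar :=
  Lub_Rbar (fun s => exists l : list V, NoDup l /\
                       s = lsum (fun x => mu x * rpow (Rabs (f x)) p) l).

(* ||f||_p (meaningful when lp_sum is finite) *)
Definition pnorm {V : Type} (mu : V -> R) (p : R) (f : V -> R) : R :=
  rpow (real (lp_sum mu p f)) (/ p).

Definition in_Lp {V : Type} (mu : V -> R) (p : R) (f : V -> R) : Prop :=
  is_finite (lp_sum mu p f).

Definition in_W1p {V : Type} (nbrs : V -> list V) (mu : V -> R)
  (w : V -> V -> R) (p : R) (u : V -> R) : Prop :=
  in_Lp mu p u /\ in_Lp mu p (grad_norm nbrs mu w u).

Definition W1p_norm {V : Type} (nbrs : V -> list V) (mu : V -> R)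
  (w : V -> V -> R) (p : R) (u : V -> R) : R :=
  pnorm mu p u + pnorm mu p (grad_norm nbrs mu w u).

Definition finitely_supported {V : Type} (f : V -> R) : Prop :=
  exists l : list V, forall x, ~ In x l -> f x = 0.

Definition in_W01p {V : Type} (nbrs : V -> list V) (mu : V -> R)
  (w : V -> V -> R) (p : R) (u : V -> R) : Prop :=
  in_W1p nbrs mu w p u /\
  forall eps, 0 < eps -> exists phi : V -> R, finitely_supported phi /\
    W1p_norm nbrs mu w p (fun x => u x - phi x) < eps.

From Stdlib Require Import Reals List Relations.
From Coquelicot Require Import Coquelicot.
From Stdlib Require Import Lra ClassicalEpsilon FunctionalExtensionality.
Open Scope R_scope.

(* For u in W^{1,p}, choose a finite set F off which mu|u|^p and mu|grad u|^p
   both have total mass below delta, and let K be F together with all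
   neighbours of F.  Then phi = u 1_K is finitely supported and v = u - phi =
   u 1_(V\K).  The p-mass of v is at most that of u off F, and grad v vanishes
   on F because v vanishes on F and on its neighbours.  Off F, the bound
   (v y - v x)^2 <= 2 (u y - u x)^2 + 2 (u x)^2 together with
   sum_y w_xy <= D <= (D / mu0) mu(x) gives
   |grad v|(x) <= sqrt 2 |grad u|(x) + sqrt (D / mu0) |u x|,
   so the p-mass of grad v is O(delta) as well. *)

Section ListSums.
Context {V : Type}.
Implicit Types (f g h : V -> R) (l : list V).

Lemma lsum_app f l1 l2 : lsum f (l1 ++ l2) = lsum f l1 + lsum f l2.
Proof. induction l1 as [|a l1 IH]; simpl; [lra | rewrite IH; lra]. Qed.

Lemma lsum_le f g l : (forall x, In x l -> f x <= g x) -> lsum f l <= lsum g l.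
Proof.
  induction l as [|a l IH]; simpl; intros Hfg; [lra|].
  apply Rplus_le_compat; auto.
Qed.

Lemma lsum_ge0 f l : (forall x, In x l -> 0 <= f x) -> 0 <= lsum f l.
Proof.
  induction l as [|a l IH]; simpl; intros Hf; [lra|].
  apply Rplus_le_le_0_compat; auto.
Qed.

Lemma lsum_eq0 f l : (forall x, In x l -> f x = 0) -> lsum f l = 0.
Proof.
  induction l as [|a l IH]; simpl; intros Hf; [lra|].
  rewrite Hf, IH; auto; lra.
Qed.

Lemma lsum_lincomb a b f g l :
  lsum (fun x => a * f x + b * g x) l = a * lsum f l + b * lsum g l.
Proof. induction l as [|x l IH]; simpl; [lra | rewrite IH; ring]. Qed.

Definition list_sums h : R -> Prop :=
  fun s => exists l, NoDup l /\ s = lsum h l.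

Lemma Lub_list_sums_le h M :
  (forall l, NoDup l -> lsum h l <= M) -> real (Lub_Rbar (list_sums h)) <= M.
Proof.
  intros HM. destruct (Lub_Rbar_correct (list_sums h)) as [Hub Hleast].
  assert (H0 : Rbar_le 0 (Lub_Rbar (list_sums h))).
  { apply Hub. exists nil. split; [constructor | reflexivity]. }
  assert (HleM : Rbar_le (Lub_Rbar (list_sums h)) M).
  { apply Hleast. intros s [l [Hl ->]]. exact (HM l Hl). }
  destruct (Lub_Rbar (list_sums h)); simpl in *; tauto.
Qed.

(* Choose [F] with [lsum h F] close to the supremum: since [lsum h (l ++ F)]
   is below the supremum, [lsum h l] is small. *)
Lemma list_sums_tail h :
  is_finite (Lub_Rbar (list_sums h)) -> forall d, 0 < d ->
  exists F, forall l, NoDup l -> (forall x, In x l -> ~ In x F) -> lsum h l <= d.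
Proof.
  intros Hfin d Hd. destruct (Lub_Rbar_correct (list_sums h)) as [Hub Hleast].
  set (S := real (Lub_Rbar (list_sums h))).
  assert (HS : Lub_Rbar (list_sums h) = Finite S) by (symmetry; exact Hfin).
  assert (Hclose : exists F, NoDup F /\ S - d < lsum h F).
  { apply NNPP; intros Hnone.
    assert (Hub' : is_ub_Rbar (list_sums h) (S - d)).
    { intros s [l [Hl ->]]. apply Rnot_lt_le. intros Hlt. apply Hnone. eauto. }
    specialize (Hleast _ Hub'). rewrite HS in Hleast. simpl in Hleast. lra. }
  destruct Hclose as [F [HF HFS]]. exists F. intros l Hl Hdisj.
  assert (Hsum : Rbar_le (lsum h (l ++ F)) (Lub_Rbar (list_sums h))).
  { apply Hub. exists (l ++ F). split; [apply NoDup_app; auto | reflexivity]. }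
  rewrite HS, lsum_app in Hsum. simpl in Hsum. lra.
Qed.

Definition outside (K : list V) (x : V) : bool :=
  if excluded_middle_informative (In x K) then false else true.

Definition cutoff (K : list V) f (x : V) : R :=
  if outside K x then f x else 0.

Lemma cutoff_in K f x : In x K -> cutoff K f x = 0.
Proof. unfold cutoff, outside. destruct excluded_middle_informative; tauto. Qed.

Lemma cutoff_notin K f x : ~ In x K -> cutoff K f x = f x.
Proof. unfold cutoff, outside. destruct excluded_middle_informative; tauto. Qed.

Lemma lsum_cutoff K f l : lsum (cutoff K f) l = lsum f (filter (outside K) l).
Proof.
  induction l as [|a l IH]; simpl; [reflexivity|].
  unfold cutoff at 1. destruct (outside K a); simpl; rewrite IH; lra.
Qed.

Lemma lsum_cutoff_le F h d :
  (forall l, NoDup l -> (forall x, In x l -> ~ In x F) -> lsum h l <= d) ->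
  forall l, NoDup l -> lsum (cutoff F h) l <= d.
Proof.
  intros Htail l Hl. rewrite lsum_cutoff. apply Htail; [now apply NoDup_filter|].
  intros x Hx. apply filter_In in Hx as [_ Hx].
  unfold outside in Hx. destruct excluded_middle_informative; [discriminate | assumption].
Qed.

Lemma cutoff_sq_diff_le K u x y :
  (cutoff K u y - cutoff K u x) ^ 2 <= 2 * (u y - u x) ^ 2 + 2 * u x ^ 2.
Proof.
  pose proof (pow2_ge_0 (u y - u x)); pose proof (pow2_ge_0 (u x));
    pose proof (pow2_ge_0 (u y - 2 * u x)).
  unfold cutoff; destruct (outside K x), (outside K y); nra.
Qed.

Definition nbhd (nbrs : V -> list V) (F : list V) : list V := F ++ flat_map nbrs F.

Lemma incl_nbhd nbrs F : incl F (nbhd nbrs F).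
Proof. apply incl_appl, incl_refl. Qed.

Lemma nbrs_in_nbhd nbrs F x y : In x F -> In y (nbrs x) -> In y (nbhd nbrs F).
Proof. intros Hx Hy. apply in_or_app; right. apply in_flat_map. eauto. Qed.

End ListSums.

Lemma rpow_ge0 a p : 0 <= rpow a p.
Proof. unfold rpow. destruct Rle_dec; [lra | left; apply exp_pos]. Qed.

Lemma rpow_0_l p : rpow 0 p = 0.
Proof. unfold rpow. destruct Rle_dec; [reflexivity | lra]. Qed.

Lemma rpow_Rpower a p : 0 < a -> rpow a p = Rpower a p.
Proof. intros Ha. unfold rpow. destruct Rle_dec; [lra | reflexivity]. Qed.

Lemma rpow_le_compat a b p : a <= b -> 0 <= p -> rpow a p <= rpow b p.
Proof.
  intros Hab Hp. unfold rpow at 1. destruct Rle_dec; [apply rpow_ge0|].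
  rewrite rpow_Rpower by lra. apply Rle_Rpower_l; lra.
Qed.

Lemma rpow_mult a b p : 0 <= a -> 0 <= b -> rpow (a * b) p = rpow a p * rpow b p.
Proof.
  intros Ha Hb.
  destruct (Req_dec a 0) as [->|Ha0]; [rewrite Rmult_0_l, rpow_0_l; ring|].
  destruct (Req_dec b 0) as [->|Hb0]; [rewrite Rmult_0_r, rpow_0_l; ring|].
  rewrite !rpow_Rpower by (try apply Rmult_lt_0_compat; lra).
  symmetry; apply Rpower_mult_distr; lra.
Qed.

Lemma rpow_plus_le a b p : 0 <= a -> 0 <= b -> 0 <= p ->
  rpow (a + b) p <= rpow 2 p * (rpow a p + rpow b p).
Proof.
  intros Ha Hb Hp.
  apply Rle_trans with (rpow (2 * Rmax a b) p).
  { apply rpow_le_compat; [|lra]. unfold Rmax; destruct Rle_dec; lra. }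
  rewrite rpow_mult by (try unfold Rmax; try destruct Rle_dec; lra).
  apply Rmult_le_compat_l; [apply rpow_ge0|].
  pose proof (rpow_ge0 a p); pose proof (rpow_ge0 b p).
  unfold Rmax; destruct Rle_dec; lra.
Qed.

Lemma rpow_Rpower_inv e p : 0 < e -> 0 < p -> rpow (Rpower e p) (/ p) = e.
Proof.
  intros He Hp. rewrite rpow_Rpower by apply exp_pos.
  rewrite Rpower_mult, Rinv_r, Rpower_1 by lra. reflexivity.
Qed.

Definition lp_density {V : Type} (mu : V -> R) (p : R) (f : V -> R) (x : V) : R :=
  mu x * rpow (Rabs (f x)) p.

Lemma pnorm_le {V : Type} (mu : V -> R) p f e : 0 < p -> 0 < e ->
  (forall l, NoDup l -> lsum (lp_density mu p f) l <= Rpower e p) ->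
  pnorm mu p f <= e.
Proof.
  intros Hp He Hsums. unfold pnorm.
  rewrite <- (rpow_Rpower_inv e p He Hp).
  apply rpow_le_compat; [now apply Lub_list_sums_le | left; now apply Rinv_0_lt_compat].
Qed.

Section Truncation.

Variables (V : Type) (nbrs : V -> list V) (mu : V -> R) (w : V -> V -> R) (C : R).
Hypothesis Hmu : forall x, 0 < mu x.
Hypothesis Hw : forall x y, In y (nbrs x) -> 0 <= w x y.
Hypothesis Hdeg : forall x, lsum (w x) (nbrs x) <= C * mu x.

Lemma grad_norm_eq0 v x :
  (forall y, In y (nbrs x) -> v y = v x) -> grad_norm nbrs mu w v x = 0.
Proof.
  intros Hconst. unfold grad_norm. rewrite lsum_eq0, Rmult_0_r; [apply sqrt_0|].
  intros y Hy. rewrite Hconst by exact Hy. ring.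
Qed.

Lemma grad_norm_sq u x : grad_norm nbrs mu w u x ^ 2 =
  / (2 * mu x) * lsum (fun y => w x y * (u y - u x) ^ 2) (nbrs x).
Proof.
  apply pow2_sqrt, Rmult_le_pos.
  - left; apply Rinv_0_lt_compat. pose proof (Hmu x); lra.
  - apply lsum_ge0; intros y Hy. apply Rmult_le_pos; [auto | apply pow2_ge_0].
Qed.

Lemma grad_norm_le_of_sq_diff_le u v x :
  (forall y, (v y - v x) ^ 2 <= 2 * (u y - u x) ^ 2 + 2 * u x ^ 2) ->
  grad_norm nbrs mu w v x <= sqrt 2 * grad_norm nbrs mu w u x + sqrt C * Rabs (u x).
Proof.
  intros Hdiff. pose proof (Hmu x) as Hmux.
  assert (HW : 0 <= lsum (w x) (nbrs x)) by (apply lsum_ge0; auto).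
  assert (HC : 0 <= C) by (pose proof (Hdeg x); nra).
  assert (Hdeg_u : u x ^ 2 * lsum (w x) (nbrs x) / mu x <= C * u x ^ 2).
  { apply Rle_div_l; [exact Hmux|]. pose proof (Hdeg x); pose proof (pow2_ge_0 (u x)); nra. }
  assert (Henergy : / (2 * mu x) * lsum (fun y => w x y * (v y - v x) ^ 2) (nbrs x)
                    <= 2 * grad_norm nbrs mu w u x ^ 2 + C * u x ^ 2).
  { rewrite grad_norm_sq.
    apply Rle_trans with (/ (2 * mu x) * (2 * lsum (fun y => w x y * (u y - u x) ^ 2) (nbrs x)
                                          + 2 * u x ^ 2 * lsum (w x) (nbrs x))).
    { apply Rmult_le_compat_l; [left; apply Rinv_0_lt_compat; lra|].
      rewrite <- lsum_lincomb. apply lsum_le. intros y Hy.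
      specialize (Hdiff y). specialize (Hw x y Hy). nra. }
    replace (/ (2 * mu x) * (2 * lsum (fun y => w x y * (u y - u x) ^ 2) (nbrs x)
                             + 2 * u x ^ 2 * lsum (w x) (nbrs x)))
      with (2 * (/ (2 * mu x) * lsum (fun y => w x y * (u y - u x) ^ 2) (nbrs x))
            + u x ^ 2 * lsum (w x) (nbrs x) / mu x) by (field; lra).
    lra. }
  assert (Hg : 0 <= grad_norm nbrs mu w u x) by apply sqrt_pos.
  assert (Hs2 : sqrt 2 ^ 2 = 2) by (apply pow2_sqrt; lra).
  assert (HsC : sqrt C ^ 2 = C) by (apply pow2_sqrt; lra).
  assert (Habs : Rabs (u x) ^ 2 = u x ^ 2) by apply pow2_abs.
  pose proof (sqrt_pos 2); pose proof (sqrt_pos C); pose proof (Rabs_pos (u x)).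
  rewrite <- (sqrt_pow2 (sqrt 2 * grad_norm nbrs mu w u x + sqrt C * Rabs (u x))) by nra.
  apply sqrt_le_1_alt. eapply Rle_trans; [exact Henergy|].
  replace ((sqrt 2 * grad_norm nbrs mu w u x + sqrt C * Rabs (u x)) ^ 2) with
    (sqrt 2 ^ 2 * grad_norm nbrs mu w u x ^ 2
     + 2 * (sqrt 2 * grad_norm nbrs mu w u x * (sqrt C * Rabs (u x)))
     + sqrt C ^ 2 * Rabs (u x) ^ 2) by ring.
  rewrite Hs2, HsC, Habs.
  assert (0 <= sqrt 2 * grad_norm nbrs mu w u x * (sqrt C * Rabs (u x)))
    by (repeat apply Rmult_le_pos; assumption).
  lra.
Qed.

Lemma grad_norm_cutoff_eq0 F u x :
  In x F -> grad_norm nbrs mu w (cutoff (nbhd nbrs F) u) x = 0.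
Proof.
  intros Hx. apply grad_norm_eq0. intros y Hy.
  rewrite !cutoff_in; [reflexivity | apply incl_nbhd, Hx | eapply nbrs_in_nbhd; eauto].
Qed.

Variable p : R.
Hypothesis Hp : 0 < p.

Lemma lp_density_ge0 f x : 0 <= lp_density mu p f x.
Proof. apply Rmult_le_pos; [left; apply Hmu | apply rpow_ge0]. Qed.

Lemma lp_density_eq0 f x : f x = 0 -> lp_density mu p f x = 0.
Proof. intros Hf. unfold lp_density. rewrite Hf, Rabs_R0, rpow_0_l. ring. Qed.

Lemma lp_density_cutoff_le F K u x :
  incl F K -> lp_density mu p (cutoff K u) x <= cutoff F (lp_density mu p u) x.
Proof.
  intros HFK. destruct (classic (In x F)) as [HxF | HxF].
  - rewrite cutoff_in, lp_density_eq0 by auto using cutoff_in. lra.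
  - rewrite cutoff_notin by exact HxF. destruct (classic (In x K)) as [HxK | HxK].
    + rewrite lp_density_eq0 by auto using cutoff_in. apply lp_density_ge0.
    + unfold lp_density. rewrite cutoff_notin by exact HxK. lra.
Qed.

Lemma lp_density_grad_cutoff_le F u x :
  lp_density mu p (grad_norm nbrs mu w (cutoff (nbhd nbrs F) u)) x <=
    rpow 2 p * rpow (sqrt 2) p * cutoff F (lp_density mu p (grad_norm nbrs mu w u)) x
    + rpow 2 p * rpow (sqrt C) p * cutoff F (lp_density mu p u) x.
Proof.
  destruct (classic (In x F)) as [HxF | HxF].
  - rewrite lp_density_eq0, !cutoff_in by auto using grad_norm_cutoff_eq0. lra.
  - rewrite !cutoff_notin by exact HxF. unfold lp_density.
    set (g := grad_norm nbrs mu w u x).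
    assert (Hg : 0 <= g) by apply sqrt_pos.
    pose proof (sqrt_pos 2); pose proof (sqrt_pos C); pose proof (Rabs_pos (u x)).
    assert (Hrpow : rpow (Rabs (grad_norm nbrs mu w (cutoff (nbhd nbrs F) u) x)) p <=
                    rpow 2 p * (rpow (sqrt 2) p * rpow g p + rpow (sqrt C) p * rpow (Rabs (u x)) p)).
    { rewrite Rabs_pos_eq by apply sqrt_pos.
      eapply Rle_trans.
      { apply rpow_le_compat; [|lra].
        apply (grad_norm_le_of_sq_diff_le u), cutoff_sq_diff_le. }
      rewrite <- !rpow_mult by assumption.
      apply rpow_plus_le; try apply Rmult_le_pos; lra. }
    rewrite (Rabs_pos_eq g) by exact Hg.
    pose proof (Hmu x).
    apply Rle_trans with (mu x * (rpow 2 p * (rpow (sqrt 2) p * rpow g p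
                                   + rpow (sqrt C) p * rpow (Rabs (u x)) p))).
    + apply Rmult_le_compat_l; lra.
    + right; ring.
Qed.

Lemma W1p_norm_cutoff_small u : in_W1p nbrs mu w p u ->
  forall eps, 0 < eps -> exists K, W1p_norm nbrs mu w p (cutoff K u) < eps.
Proof.
  intros [Hu Hgu] eps Heps.
  set (A := rpow 2 p * rpow (sqrt 2) p).
  set (B := rpow 2 p * rpow (sqrt C) p).
  assert (HA : 0 <= A) by (apply Rmult_le_pos; apply rpow_ge0).
  assert (HB : 0 <= B) by (apply Rmult_le_pos; apply rpow_ge0).
  set (e := Rpower (eps / 4) p).
  assert (He : 0 < e) by apply exp_pos.
  set (d := e / (1 + A + B)).
  assert (Hd : 0 < d) by (apply Rdiv_lt_0_compat; lra).
  assert (Hde : d * (1 + A + B) = e) by (unfold d; field; lra).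
  assert (HdA : 0 <= A * d) by (apply Rmult_le_pos; lra).
  assert (HdB : 0 <= B * d) by (apply Rmult_le_pos; lra).
  destruct (list_sums_tail _ Hu d Hd) as [F1 HF1].
  destruct (list_sums_tail _ Hgu d Hd) as [F2 HF2].
  set (F := F1 ++ F2).
  assert (Hu_off : forall l, NoDup l -> lsum (cutoff F (lp_density mu p u)) l <= d).
  { apply lsum_cutoff_le. intros l Hl Hdisj. apply HF1; [exact Hl|].
    intros x Hx HxF1. apply (Hdisj x Hx), in_or_app; left; exact HxF1. }
  assert (Hgu_off : forall l, NoDup l ->
            lsum (cutoff F (lp_density mu p (grad_norm nbrs mu w u))) l <= d).
  { apply lsum_cutoff_le. intros l Hl Hdisj. apply HF2; [exact Hl|].
    intros x Hx HxF2. apply (Hdisj x Hx), in_or_app; right; exact HxF2. }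
  exists (nbhd nbrs F). unfold W1p_norm.
  assert (Hnorm : pnorm mu p (cutoff (nbhd nbrs F) u) <= eps / 4).
  { apply pnorm_le; [exact Hp | lra |]. intros l Hl. fold e.
    eapply Rle_trans; [apply lsum_le; intros x _; apply lp_density_cutoff_le, incl_nbhd|].
    eapply Rle_trans; [apply (Hu_off l Hl) | lra]. }
  assert (Hgrad : pnorm mu p (grad_norm nbrs mu w (cutoff (nbhd nbrs F) u)) <= eps / 4).
  { apply pnorm_le; [exact Hp | lra |]. intros l Hl. fold e.
    eapply Rle_trans; [apply lsum_le; intros x _; apply lp_density_grad_cutoff_le|].
    rewrite lsum_lincomb. fold A B.
    specialize (Hu_off l Hl). specialize (Hgu_off l Hl).
    apply Rmult_le_compat_l with (r := A) in Hgu_off; [|exact HA].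
    apply Rmult_le_compat_l with (r := B) in Hu_off; [|exact HB].
    lra. }
  lra.
Qed.

End Truncation.

Lemma weighted_degree_le_measure {V : Type} (nbrs : V -> list V) (mu : V -> R)
  (w : V -> V -> R) :
  (exists mu0, 0 < mu0 /\ forall x, mu0 <= mu x) ->
  (exists D, forall x, lsum (w x) (nbrs x) <= D) ->
  exists C, forall x, lsum (w x) (nbrs x) <= C * mu x.
Proof.
  intros [mu0 [Hmu0 Hmu]] [D HD]. exists (Rmax D 0 / mu0). intros x.
  assert (HD0 : 0 <= Rmax D 0) by apply Rmax_r.
  apply Rle_trans with (Rmax D 0); [eapply Rle_trans; [apply HD | apply Rmax_l]|].
  apply Rle_trans with (Rmax D 0 / mu0 * mu0); [right; field; lra|].
  apply Rmult_le_compat_l; [apply Rdiv_le_0_compat|]; auto.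
Qed.

Theorem proposition6p2
  (V : Type) (nbrs : V -> list V) (mu : V -> R) (w : V -> V -> R)
  (* graph structure: locally finite (finite neighbour lists), undirected, no loops *)
  (Hnodup : forall x, NoDup (nbrs x))
  (Hsym_adj : forall x y, adj nbrs x y -> adj nbrs y x)
  (Hloop : forall x, ~ adj nbrs x x)
  (* connected *)
  (Hconn : forall x y, clos_refl_trans V (adj nbrs) x y)
  (* infinitely many vertices *)
  (Hinf : forall l : list V, exists x, ~ In x l)
  (* positive measure and positive edge weights *)
  (Hmu : forall x, 0 < mu x)
  (Hw : forall x y, adj nbrs x y -> 0 < w x y)
  (* (i) *)
  (Hmu0 : exists mu0, 0 < mu0 /\ forall x, mu0 <= mu x)
  (* (ii) *)
  (Hwsym : forall x y, adj nbrs x y -> w x y = w y x)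
  (HD : exists D, forall x, lsum (fun y => w x y) (nbrs x) <= D) :
  forall p : R, 1 <= p ->
  forall u : V -> R, in_W1p nbrs mu w p u <-> in_W01p nbrs mu w p u.
Proof.
  intros p Hp u. split; [| now intros [Hu _]].
  intros Hu. split; [exact Hu|]. intros eps Heps.
  destruct (weighted_degree_le_measure nbrs mu w Hmu0 HD) as [C Hdeg].
  assert (Hw' : forall x y, In y (nbrs x) -> 0 <= w x y) by (intros; now apply Rlt_le, Hw).
  assert (Hp0 : 0 < p) by lra.
  destruct (W1p_norm_cutoff_small V nbrs mu w C Hmu Hw' Hdeg p Hp0 u Hu eps Heps)
    as [K HK].
  exists (fun x => u x - cutoff K u x). split.
  - exists K. intros x Hx. rewrite cutoff_notin by exact Hx. ring.
  - replace (fun x => u x - (u x - cutoff K u x)) with (cutoff K u)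
      by (extensionality x; ring).
    exact HK.
Qed.
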